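(* For a linear-non-linear adjunction $\mathcal F\dashv\mathcal U$ and objects $X,J$ of $\mathscr C$, the functor $\Sigma_{(X,J)}:LS(\mathscr C)_{X\times J}\to LS(\mathscr C)_X$ is left adjoint to the reindexing functor $\pi_1^*:LS(\mathscr C)_X\to LS(\mathscr C)_{X\times J}$ along $\pi_1:X\times J\to X$, with unit $\nu_{(X\times J,A)}:=(\mathrm{id}_{X\times J},(m^{-1}_{X,J}\otimes\mathrm{id}_A);(\mathbf w_X\otimes\mathrm{id}_{\mathcal F(J)\otimes A})):(X\times J,A)\to(X\times J,\mathcal F(J)\otimes A)$ and counit $\mu_{(X,A)}:=(\mathrm{id}_X,\mathbf w_X\otimes\mathbf w_J\otimes\mathrm{id}_A):(X,\mathcal F(J)\otimes A)\to(X,A)$.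
   Context: Composition is diagrammatic; monoidal categories are strict. A linear-non-linear adjunction is a symmetric monoidal adjunction $\mathcal F\dashv\mathcal U$, $\mathcal F:\mathscr C\to\mathcal L$, between a cartesian $(\mathscr C,\times,I)$ and a symmetric monoidal $(\mathcal L,\otimes,1)$ (symmetry $\sigma$), with $\mathcal F$ strong monoidal via isomorphisms $m_{X,Y}:\mathcal F(X)\otimes\mathcal F(Y)\to\mathcal F(X\times Y)$, $m_1:1\to\mathcal F(I)$. $\mathbf c_X:=\mathcal F(\Delta_X);m_{X,X}^{-1}$, $\mathbf w_X:=\mathcal F(t_X);m_1^{-1}$ ($t_X:X\to I$ terminal). $LS(\mathscr C)$: objects $(X,A)$ with $X\in\mathscr C$, $A\in\mathcal L$; morphisms $(f,u):(X,A)\to(Y,B)$ with $f:X\to Y$, $u:\mathcal F(X)\otimes A\to B$; composition $(f,u);(g,v)=(f;g,(\mathbf c_X\otimes\mathrm{id}_A);(\mathcal F(f)\otimes u);v)$; identity $(\mathrm{id}_X,\mathbf w_X\otimes\mathrm{id}_A)$. The fibre $LS(\mathscr C)_X$ has objects $(X,A)$ and morphisms $(\mathrm{id}_X,u)$. For $f:X'\to X$, the reindexing $f^*:LS(\mathscr C)_X\to LS(\mathscr C)_{X'}$ is $(X,B)\mapsto(X',B)$, $(\mathrm{id}_X,v)\mapsto(\mathrm{id}_{X'},(\mathcal F(f)\otimes\mathrm{id}_B);v)$. $\Sigma_{(X,J)}$: on objects $(X\times J,A)\mapsto(X,\mathcal F(J)\otimes A)$; on $(\mathrm{id}_{X\times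 J},u):(X\times J,A)\to(X\times J,B)$ it gives $(\mathrm{id}_X,(\mathrm{id}_{\mathcal F(X)}\otimes\mathbf c_J\otimes\mathrm{id}_A);(\sigma_{\mathcal F(X),\mathcal F(J)}\otimes\mathrm{id}_{\mathcal F(J)\otimes A});(\mathrm{id}_{\mathcal F(J)}\otimes((m_{X,J}\otimes\mathrm{id}_A);u)))$. *)

Set Implicit Arguments.
Unset Strict Implicit.

(* Composition is diagrammatic: ccomp f g = f;g.                        *)
Record cartesian_cat := CartesianCat {
  Ob : Type;
  Hom : Ob -> Ob -> Type;
  cid : forall X, Hom X X;
  ccomp : forall X Y Z, Hom X Y -> Hom Y Z -> Hom X Z;
  cprod : Ob -> Ob -> Ob;
  cp1 : forall X Y, Hom (cprod X Y) X;
  cp2 : forall X Y, Hom (cprod X Y) Y;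
  cpair : forall Z X Y, Hom Z X -> Hom Z Y -> Hom Z (cprod X Y);
  cterm : Ob;
  cbang : forall X, Hom X cterm;
  ccomp_idl : forall X Y (f : Hom X Y), ccomp (cid X) f = f;
  ccomp_idr : forall X Y (f : Hom X Y), ccomp f (cid Y) = f;
  ccompA : forall X Y Z W (f : Hom X Y) (g : Hom Y Z) (h : Hom Z W),
      ccomp (ccomp f g) h = ccomp f (ccomp g h);
  cpair_p1 : forall Z X Y (f : Hom Z X) (g : Hom Z Y), ccomp (cpair f g) (cp1 X Y) = f;
  cpair_p2 : forall Z X Y (f : Hom Z X) (g : Hom Z Y), ccomp (cpair f g) (cp2 X Y) = g;
  cpair_uniq : forall Z X Y (h : Hom Z (cprod X Y)),
      cpair (ccomp h (cp1 X Y)) (ccomp h (cp2 X Y)) = h;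
  cbang_uniq : forall X (f : Hom X cterm), f = cbang X
}.

Arguments Hom : clear implicits.
Arguments cprod : clear implicits.
Arguments cid {C} X : rename.
Arguments ccomp {C X Y Z} f g : rename.
Arguments cp1 {C} X Y : rename.
Arguments cp2 {C} X Y : rename.
Arguments cpair {C Z X Y} f g : rename.
Arguments cterm {C} : rename.
Arguments cbang {C} X : rename.

Section CartesianDerived.
Variable C : cartesian_cat.
Definition cprodm (X Y X' Y' : Ob C) (f : Hom C X X') (g : Hom C Y Y')
  : Hom C (cprod C X Y) (cprod C X' Y') :=
  cpair (ccomp (cp1 X Y) f) (ccomp (cp2 X Y) g).
Definition cdiag (X : Ob C) : Hom C X (cprod C X X) := cpair (cid X) (cid X).
Definition cassoc (X Y Z : Ob C)
  : Hom C (cprod C (cprod C X Y) Z) (cprod C X (cprod C Y Z)) :=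
  cpair (ccomp (cp1 _ _) (cp1 X Y))
        (cpair (ccomp (cp1 _ _) (cp2 X Y)) (cp2 _ Z)).
Definition cswap (X Y : Ob C) : Hom C (cprod C X Y) (cprod C Y X) :=
  cpair (cp2 X Y) (cp1 X Y).
End CartesianDerived.

(* Strict symmetric monoidal categories, presented by their arrows      *)
(* (dom/cod), so that strictness is plain equality of objects/arrows.   *)
(* lcomp f g = f;g is meaningful when lcod f = ldom g.                  *)
Record smcat := SMCat {
  LOb : Type;
  LAr : Type;
  ldom : LAr -> LOb;
  lcod : LAr -> LOb;
  lid : LOb -> LAr;
  lcomp : LAr -> LAr -> LAr;
  tens : LOb -> LOb -> LOb;
  tensA : LAr -> LAr -> LAr;
  lunit : LOb;
  lsym : LOb -> LOb -> LAr;
  ldom_id : forall a, ldom (lid a) = a;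
  lcod_id : forall a, lcod (lid a) = a;
  ldom_comp : forall f g, lcod f = ldom g -> ldom (lcomp f g) = ldom f;
  lcod_comp : forall f g, lcod f = ldom g -> lcod (lcomp f g) = lcod g;
  lcomp_idl : forall f, lcomp (lid (ldom f)) f = f;
  lcomp_idr : forall f, lcomp f (lid (lcod f)) = f;
  lcompA : forall f g h, lcod f = ldom g -> lcod g = ldom h ->
      lcomp (lcomp f g) h = lcomp f (lcomp g h);
  ldom_tens : forall f g, ldom (tensA f g) = tens (ldom f) (ldom g);
  lcod_tens : forall f g, lcod (tensA f g) = tens (lcod f) (lcod g);
  tens_id : forall a b, tensA (lid a) (lid b) = lid (tens a b);
  tens_comp : forall f g f' g', lcod f = ldom g -> lcod f' = ldom g' ->
      tensA (lcomp f g) (lcomp f' g') = lcomp (tensA f f') (tensA g g');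
  tens_assoc : forall a b c, tens (tens a b) c = tens a (tens b c);
  tens_unitl : forall a, tens lunit a = a;
  tens_unitr : forall a, tens a lunit = a;
  tensA_assoc : forall f g h, tensA (tensA f g) h = tensA f (tensA g h);
  tensA_unitl : forall f, tensA (lid lunit) f = f;
  tensA_unitr : forall f, tensA f (lid lunit) = f;
  ldom_sym : forall a b, ldom (lsym a b) = tens a b;
  lcod_sym : forall a b, lcod (lsym a b) = tens b a;
  lsym_nat : forall f g,
      lcomp (tensA f g) (lsym (lcod f) (lcod g)) = lcomp (lsym (ldom f) (ldom g)) (tensA g f);
  lsym_inv : forall a b, lcomp (lsym a b) (lsym b a) = lid (tens a b);
  lsym_hex : forall a b c,
      lsym a (tens b c) = lcomp (tensA (lsym a b) (lid c)) (tensA (lid b) (lsym a c))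
}.

Arguments LOb : clear implicits.
Arguments LAr : clear implicits.
Arguments ldom {L} f : rename.
Arguments lcod {L} f : rename.
Arguments lid {L} a : rename.
Arguments lcomp {L} f g : rename.
Arguments tens {L} a b : rename.
Arguments tensA {L} f g : rename.
Arguments lunit {L} : rename.
Arguments lsym {L} a b : rename.

(* Linear-non-linear adjunction F -| U : L -> C, F strong symmetric    *)
(* monoidal via m, m1; the adjunction is given by the universal counit. *)
Record lnl (C : cartesian_cat) (L : smcat) := LNL {
  Fo : Ob C -> LOb L;
  Fm : forall X Y : Ob C, Hom C X Y -> LAr L;
  Fm_dom : forall X Y (f : Hom C X Y), ldom (Fm f) = Fo X;
  Fm_cod : forall X Y (f : Hom C X Y), lcod (Fm f) = Fo Y;
  Fm_id : forall X, Fm (cid X) = lid (Fo X);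
  Fm_comp : forall X Y Z (f : Hom C X Y) (g : Hom C Y Z),
      Fm (ccomp f g) = lcomp (Fm f) (Fm g);
  mm : Ob C -> Ob C -> LAr L;
  mminv : Ob C -> Ob C -> LAr L;
  mm_dom : forall X Y, ldom (mm X Y) = tens (Fo X) (Fo Y);
  mm_cod : forall X Y, lcod (mm X Y) = Fo (cprod C X Y);
  mminv_dom : forall X Y, ldom (mminv X Y) = Fo (cprod C X Y);
  mminv_cod : forall X Y, lcod (mminv X Y) = tens (Fo X) (Fo Y);
  mm_mminv : forall X Y, lcomp (mm X Y) (mminv X Y) = lid (tens (Fo X) (Fo Y));
  mminv_mm : forall X Y, lcomp (mminv X Y) (mm X Y) = lid (Fo (cprod C X Y));
  m1 : LAr L;
  m1inv : LAr L;
  m1_dom : ldom m1 = lunit;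
  m1_cod : lcod m1 = Fo cterm;
  m1inv_dom : ldom m1inv = Fo cterm;
  m1inv_cod : lcod m1inv = lunit;
  m1_m1inv : lcomp m1 m1inv = lid lunit;
  m1inv_m1 : lcomp m1inv m1 = lid (Fo cterm);
  mm_nat : forall X Y X' Y' (f : Hom C X X') (g : Hom C Y Y'),
      lcomp (tensA (Fm f) (Fm g)) (mm X' Y') = lcomp (mm X Y) (Fm (cprodm f g));
  mm_assoc : forall X Y Z,
      lcomp (lcomp (tensA (mm X Y) (lid (Fo Z))) (mm (cprod C X Y) Z)) (Fm (cassoc X Y Z))
      = lcomp (tensA (lid (Fo X)) (mm Y Z)) (mm X (cprod C Y Z));
  mm_unitl : forall X,
      lcomp (lcomp (tensA m1 (lid (Fo X))) (mm cterm X)) (Fm (cp2 cterm X)) = lid (Fo X);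
  mm_unitr : forall X,
      lcomp (lcomp (tensA (lid (Fo X)) m1) (mm X cterm)) (Fm (cp1 X cterm)) = lid (Fo X);
  mm_sym : forall X Y,
      lcomp (lsym (Fo X) (Fo Y)) (mm Y X) = lcomp (mm X Y) (Fm (cswap X Y));
  Uo : LOb L -> Ob C;
  ceps : LOb L -> LAr L;
  ceps_dom : forall a, ldom (ceps a) = Fo (Uo a);
  ceps_cod : forall a, lcod (ceps a) = a;
  ceps_univ : forall (X : Ob C) (a : LOb L) (g : LAr L),
      ldom g = Fo X -> lcod g = a ->
      exists f : Hom C X (Uo a),
        lcomp (Fm f) (ceps a) = g /\
        forall f' : Hom C X (Uo a), lcomp (Fm f') (ceps a) = g -> f' = f
}.

Arguments Fo {C L} A X : rename.
Arguments Fm {C L} A {X Y} f : rename.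
Arguments mm {C L} A X Y : rename.
Arguments mminv {C L} A X Y : rename.
Arguments m1 {C L} A : rename.
Arguments m1inv {C L} A : rename.

(* has_type f A B : f is a morphism A -> B; pcomp A B C f g = f;g.     *)
Record precat := PreCat {
  pob : Type;
  phom : Type;
  has_type : phom -> pob -> pob -> Prop;
  pid : pob -> phom;
  pcomp : pob -> pob -> pob -> phom -> phom -> phom
}.
Arguments has_type {P} f A B : rename.
Arguments pid {P} A : rename.
Arguments pcomp {P} A B C f g : rename.

Record prefunctor (P Q : precat) := PreFunctor {
  fob : pob P -> pob Q;
  fhom : pob P -> pob P -> phom P -> phom Q
}.
Arguments fob {P Q} F A : rename.
Arguments fhom {P Q} F A B f : rename.

Definition is_functor (P Q : precat) (F : prefunctor P Q) : Prop :=
  (forall A B f, has_type f A B -> has_type (fhom F A B f) (fob F A) (fob F B)) /\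
  (forall A, fhom F A A (pid A) = pid (fob F A)) /\
  (forall A B C f g, has_type f A B -> has_type g B C ->
     fhom F A C (pcomp A B C f g)
     = pcomp (fob F A) (fob F B) (fob F C) (fhom F A B f) (fhom F B C g)).

Definition is_adjunction (P Q : precat) (Fl : prefunctor P Q) (G : prefunctor Q P)
    (eta : pob P -> phom P) (eps : pob Q -> phom Q) : Prop :=
  is_functor Fl /\ is_functor G /\
  (forall A, has_type (eta A) A (fob G (fob Fl A))) /\
  (forall B, has_type (eps B) (fob Fl (fob G B)) B) /\
  (forall A A' f, has_type f A A' ->
     pcomp A A' (fob G (fob Fl A')) f (eta A')
     = pcomp A (fob G (fob Fl A)) (fob G (fob Fl A')) (eta A)
         (fhom G (fob Fl A) (fob Fl A') (fhom Fl A A' f))) /\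
  (forall B B' g, has_type g B B' ->
     pcomp (fob Fl (fob G B)) (fob Fl (fob G B')) B'
         (fhom Fl (fob G B) (fob G B') (fhom G B B' g)) (eps B')
     = pcomp (fob Fl (fob G B)) B B' (eps B) g) /\
  (forall A, pcomp (fob Fl A) (fob Fl (fob G (fob Fl A))) (fob Fl A)
               (fhom Fl A (fob G (fob Fl A)) (eta A)) (eps (fob Fl A))
             = pid (fob Fl A)) /\
  (forall B, pcomp (fob G B) (fob G (fob Fl (fob G B))) (fob G B)
               (eta (fob G B)) (fhom G (fob Fl (fob G B)) B (eps B))
             = pid (fob G B)).

Section LS.
Variables (C : cartesian_cat) (L : smcat) (Ad : lnl C L).

Local Notation "f ;; g" := (lcomp f g) (at level 40, left associativity).
Local Notation "f ** g" := (tensA f g) (at level 35, right associativity).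
Local Notation F := (Fo Ad).

Definition cmap (X : Ob C) : LAr L := Fm Ad (cdiag X) ;; mminv Ad X X.
Definition wmap (X : Ob C) : LAr L := Fm Ad (cbang X) ;; m1inv Ad.

(* LS(C): a morphism (f,u) : (X,A) -> (Y,B) is f : X -> Y with
   u : F(X) (x) A -> B.  Second component of (f,u);(g,v): *)
Definition LS_comp_snd (X Y : Ob C) (A : LOb L) (f : Hom C X Y) (u v : LAr L) : LAr L :=
  (cmap X ** lid A) ;; (Fm Ad f ** u) ;; v.
Definition LS_id_snd (X : Ob C) (A : LOb L) : LAr L := wmap X ** lid A.

(* The fibre LS(C)_X: objects (X,A) (identified with A), morphisms (id_X,u)
   (identified with u); composition and identities are those of LS(C). *)
Definition LSfib (X : Ob C) : precat :=
  {| pob := LOb L;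
     phom := LAr L;
     has_type := fun (u : LAr L) (A B : LOb L) => ldom u = tens (F X) A /\ lcod u = B;
     pid := LS_id_snd X;
     pcomp := fun (A _ _ : LOb L) (u v : LAr L) => LS_comp_snd A (cid X) u v |}.

Definition reindex (X' X : Ob C) (f : Hom C X' X) : prefunctor (LSfib X) (LSfib X') :=
  @PreFunctor (LSfib X) (LSfib X')
    (fun B : LOb L => B)
    (fun (B _ : LOb L) (v : LAr L) => (Fm Ad f ** lid B) ;; v).

Definition Sigma (X J : Ob C) : prefunctor (LSfib (cprod C X J)) (LSfib X) :=
  @PreFunctor (LSfib (cprod C X J)) (LSfib X)
    (fun A : LOb L => tens (F J) A)
    (fun (A _ : LOb L) (u : LAr L) =>
       (lid (F X) ** cmap J ** lid A)
       ;; (lsym (F X) (F J) ** lid (tens (F J) A))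
       ;; (lid (F J) ** ((mm Ad X J ** lid A) ;; u))).

Definition nu (X J : Ob C) (A : LOb L) : LAr L :=
  (mminv Ad X J ** lid A) ;; (wmap X ** lid (tens (F J) A)).

Definition mu (X J : Ob C) (A : LOb L) : LAr L :=
  wmap X ** wmap J ** lid A.

End LS.

(* Let δ := ⟨π₂, id⟩ : X × J → J × (X × J) and consider the strength
   D := m_{X,J} ; F δ ; m⁻¹_{J,X×J} : F X ⊗ F J → F J ⊗ F (X × J).
   Coherence of m with the symmetry and the diagonal gives Σ u = (D ⊗ A) ; (F J ⊗ u),
   and ν = F π₂ ⊗ A.  Functoriality of Σ then reduces to D commuting with weakening,
   D ; (F J ⊗ w) = w ⊗ F J, and with copying,
   (c ⊗ F J) ; (F X ⊗ D) ; (D ⊗ F (X × J)) = D ; (F J ⊗ c);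
   naturality of ν and μ and the triangle identities follow from the comonoid laws
   c ; (w ⊗ F X) = id = c ; (F X ⊗ w) together with m ; F πᵢ being a weakening.
   Every such equation is proved by moving all the m's to one side, where both sides
   become F applied to maps of C with equal projections. *)

Set Implicit Arguments.
Unset Strict Implicit.

Notation "f ;; g" := (lcomp f g) (at level 40, left associativity).
Notation "f ** g" := (tensA f g) (at level 35, right associativity).

#[local] Hint Rewrite ldom_id lcod_id ldom_tens lcod_tens ldom_sym lcod_sym
  Fm_dom Fm_cod mm_dom mm_cod mminv_dom mminv_cod m1_dom m1_cod m1inv_dom m1inv_cod
  tens_assoc tens_unitl tens_unitr : arrow_shape.

(* Closes the (co)domain side conditions [ldom f = a], [lcod f = ldom g]
   generated by the untyped presentation of the monoidal category. *)
Ltac arrow_shape :=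
  repeat first
    [ progress autorewrite with arrow_shape
    | rewrite ldom_comp by arrow_shape
    | rewrite lcod_comp by arrow_shape
    | match goal with H : ldom ?f = _ |- context [ldom ?f] => rewrite H end
    | match goal with H : lcod ?f = _ |- context [lcod ?f] => rewrite H end ];
  reflexivity.

Section SymmetricMonoidal.
Variable L : smcat.
Implicit Types f g h k u : LAr L.
Implicit Types a b : LOb L.

Lemma lid_lcomp f a : ldom f = a -> lid a ;; f = f.
Proof. intros <-; apply lcomp_idl. Qed.

Lemma lcomp_lid f a : lcod f = a -> f ;; lid a = f.
Proof. intros <-; apply lcomp_idr. Qed.

Lemma lcomp_tensA f g h k : lcod f = ldom h -> lcod g = ldom k ->
  (f ** g) ;; (h ** k) = (f ;; h) ** (g ;; k).
Proof. intros; symmetry; apply tens_comp; assumption. Qed.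

Lemma tensA_lcompl f g a : lcod f = ldom g ->
  (f ;; g) ** lid a = (f ** lid a) ;; (g ** lid a).
Proof. intros; rewrite lcomp_tensA, lid_lcomp by arrow_shape; reflexivity. Qed.

Lemma tensA_lcompr f g a : lcod f = ldom g ->
  lid a ** (f ;; g) = (lid a ** f) ;; (lid a ** g).
Proof. intros; rewrite lcomp_tensA, lid_lcomp by arrow_shape; reflexivity. Qed.

Lemma tensA_splitl f g : f ** g = (f ** lid (ldom g)) ;; (lid (lcod f) ** g).
Proof. rewrite lcomp_tensA, lcomp_lid, lid_lcomp by arrow_shape; reflexivity. Qed.

Lemma tensA_interchange u g a b : ldom g = a -> lcod u = b ->
  (lid a ** u) ;; (g ** lid b) = (g ** lid (ldom u)) ;; (lid (lcod g) ** u).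
Proof.
  intros; rewrite !lcomp_tensA, lid_lcomp, lcomp_lid, lcomp_lid, lid_lcomp by arrow_shape.
  reflexivity.
Qed.

Lemma lcompA_congr f g r z : f ;; g = r -> lcod z = ldom f -> lcod f = ldom g ->
  z ;; f ;; g = z ;; r.
Proof. intros <- ? ?; apply lcompA; assumption. Qed.

Lemma lcompA3_congr f g h r z : f ;; g ;; h = r ->
  lcod z = ldom f -> lcod f = ldom g -> lcod g = ldom h ->
  z ;; f ;; g ;; h = z ;; r.
Proof.
  intros <- ? ? ?.
  rewrite (lcompA (f := z ;; f)), lcompA, <- (lcompA (f := f)) by arrow_shape.
  reflexivity.
Qed.

Lemma split_mono_cancel f g h h' : ldom h' = lcod h -> h ;; h' = lid (ldom h) ->
  lcod f = ldom h -> lcod g = ldom h -> f ;; h = g ;; h -> f = g.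
Proof.
  intros Hh' Hhh' Hf Hg Hfg.
  rewrite <- (lcomp_lid Hf), <- (lcomp_lid Hg), <- Hhh', <- !lcompA by arrow_shape.
  rewrite Hfg; reflexivity.
Qed.

End SymmetricMonoidal.

Section Cartesian.
Variable C : cartesian_cat.

Lemma ccomp_pair Z' Z X Y (h : Hom C Z' Z) (f : Hom C Z X) (g : Hom C Z Y) :
  ccomp h (cpair f g) = cpair (ccomp h f) (ccomp h g).
Proof.
  rewrite <- (cpair_uniq (ccomp h (cpair f g))), !ccompA, cpair_p1, cpair_p2.
  reflexivity.
Qed.

Lemma cpair_ext Z X Y (f g : Hom C Z (cprod C X Y)) :
  ccomp f (cp1 X Y) = ccomp g (cp1 X Y) -> ccomp f (cp2 X Y) = ccomp g (cp2 X Y) -> f = g.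
Proof. intros H1 H2; rewrite <- (cpair_uniq f), <- (cpair_uniq g), H1, H2; reflexivity. Qed.

Lemma cpair_p1_comp Z X Y W (f : Hom C Z X) (g : Hom C Z Y) (h : Hom C X W) :
  ccomp (cpair f g) (ccomp (cp1 X Y) h) = ccomp f h.
Proof. rewrite <- ccompA, cpair_p1; reflexivity. Qed.

Lemma cpair_p2_comp Z X Y W (f : Hom C Z X) (g : Hom C Z Y) (h : Hom C Y W) :
  ccomp (cpair f g) (ccomp (cp2 X Y) h) = ccomp g h.
Proof. rewrite <- ccompA, cpair_p2; reflexivity. Qed.

Definition cassoc_inv (X Y Z : Ob C) :
  Hom C (cprod C X (cprod C Y Z)) (cprod C (cprod C X Y) Z) :=
  cpair (cpair (cp1 _ _) (ccomp (cp2 _ _) (cp1 Y Z))) (ccomp (cp2 _ _) (cp2 Y Z)).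

End Cartesian.

Ltac cartesian :=
  unfold cprodm, cdiag, cassoc, cswap, cassoc_inv in *;
  repeat first
    [ rewrite ccompA | rewrite ccomp_pair | rewrite cpair_p1 | rewrite cpair_p2
    | rewrite cpair_p1_comp | rewrite cpair_p2_comp | rewrite ccomp_idl | rewrite ccomp_idr ];
  first [ reflexivity | apply cpair_ext; cartesian ].

Lemma wmap_dom C L (Ad : lnl C L) X : ldom (wmap Ad X) = Fo Ad X.
Proof. unfold wmap; arrow_shape. Qed.
Lemma wmap_cod C L (Ad : lnl C L) X : lcod (wmap Ad X) = lunit.
Proof. unfold wmap; arrow_shape. Qed.
Lemma cmap_dom C L (Ad : lnl C L) X : ldom (cmap Ad X) = Fo Ad X.
Proof. unfold cmap; arrow_shape. Qed.
Lemma cmap_cod C L (Ad : lnl C L) X : lcod (cmap Ad X) = tens (Fo Ad X) (Fo Ad X).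
Proof. unfold cmap; arrow_shape. Qed.

#[local] Hint Rewrite wmap_dom wmap_cod cmap_dom cmap_cod : arrow_shape.

Section LinearNonLinear.
Variables (C : cartesian_cat) (L : smcat) (Ad : lnl C L).
Local Notation F := (Fo Ad).
Local Notation Fm := (Fm Ad).
Local Notation m := (mm Ad).
Local Notation mi := (mminv Ad).
Local Notation w := (wmap Ad).
Local Notation c := (cmap Ad).

Lemma mminv_nat X Y X' Y' (f : Hom C X X') (g : Hom C Y Y') :
  mi X Y ;; (Fm f ** Fm g) = Fm (cprodm f g) ;; mi X' Y'.
Proof.
  rewrite <- (lcomp_lid (f := mi X Y ;; _) (a := tens (F X') (F Y'))) by arrow_shape.
  rewrite <- mm_mminv, <- lcompA, (lcompA (f := mi X Y)), mm_nat by arrow_shape.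
  rewrite <- lcompA, mminv_mm, lid_lcomp by arrow_shape.
  reflexivity.
Qed.

Lemma Fm_wmap X Y (f : Hom C X Y) : Fm f ;; w Y = w X.
Proof.
  unfold wmap; rewrite <- lcompA, <- Fm_comp, (cbang_uniq (ccomp f (cbang Y))) by arrow_shape.
  reflexivity.
Qed.

Lemma mm_Fcp1 X Y : m X Y ;; Fm (cp1 X Y) = lid (F X) ** w Y.
Proof.
  assert (Hunit : m X cterm ;; Fm (cp1 X cterm) = lid (F X) ** m1inv Ad).
  { transitivity ((lid (F X) ** m1inv Ad) ;; ((lid (F X) ** m1 Ad) ;; m X cterm ;; Fm (cp1 X cterm))).
    - rewrite <- !lcompA, lcomp_tensA, m1inv_m1, lid_lcomp, tens_id, lid_lcomp by arrow_shape.
      reflexivity.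
    - rewrite mm_unitr, lcomp_lid by arrow_shape; reflexivity. }
  replace (cp1 X Y) with (ccomp (cprodm (cid X) (cbang Y)) (cp1 X cterm)) by cartesian.
  rewrite Fm_comp, <- lcompA, <- mm_nat, Fm_id, lcompA, Hunit, lcomp_tensA, lid_lcomp
    by arrow_shape.
  reflexivity.
Qed.

Lemma mm_Fcp2 X Y : m X Y ;; Fm (cp2 X Y) = w X ** lid (F Y).
Proof.
  assert (Hunit : m cterm Y ;; Fm (cp2 cterm Y) = m1inv Ad ** lid (F Y)).
  { transitivity ((m1inv Ad ** lid (F Y)) ;; ((m1 Ad ** lid (F Y)) ;; m cterm Y ;; Fm (cp2 cterm Y))).
    - rewrite <- !lcompA, lcomp_tensA, m1inv_m1, lid_lcomp, tens_id, lid_lcomp by arrow_shape.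
      reflexivity.
    - rewrite mm_unitl, lcomp_lid by arrow_shape; reflexivity. }
  replace (cp2 X Y) with (ccomp (cprodm (cbang X) (cid Y)) (cp2 cterm Y)) by cartesian.
  rewrite Fm_comp, <- lcompA, <- mm_nat, Fm_id, lcompA, Hunit, lcomp_tensA, lid_lcomp
    by arrow_shape.
  reflexivity.
Qed.

Lemma mminv_lid_wmap X Y : mi X Y ;; (lid (F X) ** w Y) = Fm (cp1 X Y).
Proof. rewrite <- mm_Fcp1, <- lcompA, mminv_mm, lid_lcomp by arrow_shape; reflexivity. Qed.

Lemma mminv_wmap_lid X Y : mi X Y ;; (w X ** lid (F Y)) = Fm (cp2 X Y).
Proof. rewrite <- mm_Fcp2, <- lcompA, mminv_mm, lid_lcomp by arrow_shape; reflexivity. Qed.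

Lemma cmap_wmap_lid X : c X ;; (w X ** lid (F X)) = lid (F X).
Proof.
  unfold cmap at 1; rewrite lcompA, mminv_wmap_lid, <- Fm_comp by arrow_shape.
  replace (ccomp (cdiag X) (cp2 X X)) with (cid X) by cartesian.
  apply Fm_id.
Qed.

Lemma cmap_lid_wmap X : c X ;; (lid (F X) ** w X) = lid (F X).
Proof.
  unfold cmap at 1; rewrite lcompA, mminv_lid_wmap, <- Fm_comp by arrow_shape.
  replace (ccomp (cdiag X) (cp1 X X)) with (cid X) by cartesian.
  apply Fm_id.
Qed.

Lemma cmap_nat X Y (f : Hom C X Y) : Fm f ;; c Y = c X ;; (Fm f ** Fm f).
Proof.
  unfold cmap; rewrite <- lcompA, <- Fm_comp, lcompA, mminv_nat, <- lcompA, <- Fm_comp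
    by arrow_shape.
  do 2 f_equal; cartesian.
Qed.

Lemma cmap_mm X : c X ;; m X X = Fm (cdiag X).
Proof. unfold cmap; rewrite lcompA, mminv_mm, lcomp_lid by arrow_shape; reflexivity. Qed.

Lemma cmap_Fcp X Y : c (cprod C X Y) ;; (Fm (cp1 X Y) ** Fm (cp2 X Y)) = mi X Y.
Proof.
  unfold cmap; rewrite lcompA, mminv_nat, <- lcompA, <- Fm_comp by arrow_shape.
  replace (ccomp (cdiag (cprod C X Y)) (cprodm (cp1 X Y) (cp2 X Y)))
    with (cid (cprod C X Y)) by cartesian.
  rewrite Fm_id, lid_lcomp by arrow_shape; reflexivity.
Qed.

Lemma mminv_mm_assoc X Y Z :
  (mi X Y ** lid (F Z)) ;; (lid (F X) ** m Y Z) ;; m X (cprod C Y Z)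
  = m (cprod C X Y) Z ;; Fm (cassoc X Y Z).
Proof.
  rewrite lcompA, <- mm_assoc, <- !lcompA, <- tens_comp, mminv_mm, lid_lcomp, tens_id, lid_lcomp
    by arrow_shape.
  reflexivity.
Qed.

Lemma mminv_mm_assoc_inv X Y Z :
  (lid (F X) ** mi Y Z) ;; (m X Y ** lid (F Z)) ;; m (cprod C X Y) Z
  = m X (cprod C Y Z) ;; Fm (cassoc_inv X Y Z).
Proof.
  assert (Hinv : (m X Y ** lid (F Z)) ;; m (cprod C X Y) Z
                 = (lid (F X) ** m Y Z) ;; m X (cprod C Y Z) ;; Fm (cassoc_inv X Y Z)).
  { rewrite <- mm_assoc, lcompA, <- Fm_comp by arrow_shape.
    replace (ccomp (cassoc X Y Z) (cassoc_inv X Y Z)) with (cid (cprod C (cprod C X Y) Z))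
      by cartesian.
    rewrite Fm_id, lcomp_lid by arrow_shape; reflexivity. }
  rewrite lcompA, Hinv, <- !lcompA, <- tens_comp, mminv_mm, lid_lcomp, tens_id, lid_lcomp
    by arrow_shape.
  reflexivity.
Qed.

Lemma LS_comp_snd_wmap Y a u k : ldom u = tens (F Y) a -> lcod u = ldom k ->
  LS_comp_snd Ad a (cid Y) u (w Y ** k) = u ;; k.
Proof.
  intros Hu Hk; unfold LS_comp_snd; rewrite Fm_id, lcompA, lcomp_tensA, lid_lcomp
    by arrow_shape.
  rewrite (tensA_splitl (w Y)), wmap_cod, tensA_unitl, <- lcompA by arrow_shape.
  replace (ldom (u ;; k)) with (tens (F Y) a) by (symmetry; arrow_shape).
  rewrite <- (tens_id (F Y) a), <- tensA_assoc, lcomp_tensA, cmap_wmap_lid, lid_lcomp, tens_id, lid_lcomp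
    by arrow_shape.
  reflexivity.
Qed.

End LinearNonLinear.

Section Reindexing.
Variables (C : cartesian_cat) (L : smcat) (Ad : lnl C L) (X' X : Ob C) (f : Hom C X' X).
Local Notation F := (Fo Ad).
Local Notation Fm := (Fm Ad).
Local Notation w := (wmap Ad).
Local Notation c := (cmap Ad).

Lemma reindex_id B : (Fm f ** lid B) ;; (w X ** lid B) = w X' ** lid B.
Proof. rewrite lcomp_tensA, Fm_wmap, lid_lcomp by arrow_shape; reflexivity. Qed.

Lemma reindex_comp A B D u v :
  ldom u = tens (F X) A -> lcod u = B -> ldom v = tens (F X) B -> lcod v = D ->
  (Fm f ** lid A) ;; LS_comp_snd Ad A (cid X) u v
  = LS_comp_snd Ad A (cid X') ((Fm f ** lid A) ;; u) ((Fm f ** lid B) ;; v).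
Proof.
  intros Hu Hu' Hv Hv'; unfold LS_comp_snd; rewrite !Fm_id.
  transitivity ((c X' ** lid A) ;; ((Fm f ** Fm f) ** lid A) ;; (lid (F X) ** u) ;; v).
  - rewrite <- !lcompA, (lcomp_tensA (f := Fm f)), cmap_nat, lid_lcomp, tensA_lcompl
      by arrow_shape.
    reflexivity.
  - rewrite tensA_lcompr, <- !lcompA, (lcompA (g := lid (F X') ** u)) by arrow_shape.
    rewrite (tensA_interchange (u := u)), Hu, Fm_cod, <- lcompA by arrow_shape.
    rewrite (lcompA (g := lid (F X') ** (Fm f ** lid A))) by arrow_shape.
    rewrite (lcomp_tensA (f := lid (F X'))), lid_lcomp, lcomp_lid, <- tensA_assoc
      by arrow_shape.
    reflexivity.
Qed.

Lemma reindex_is_functor : is_functor (reindex Ad f).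
Proof.
  split; [| split].
  - intros B B' v [Hv Hv']; split; cbn; arrow_shape.
  - intro B; apply reindex_id.
  - intros A B D u v [Hu Hu'] [Hv Hv']; exact (reindex_comp Hu Hu' Hv Hv').
Qed.

End Reindexing.

Section SigmaAdjunction.
Variables (C : cartesian_cat) (L : smcat) (Ad : lnl C L) (X J : Ob C).
Local Notation F := (Fo Ad).
Local Notation Fm := (Fm Ad).
Local Notation m := (mm Ad).
Local Notation mi := (mminv Ad).
Local Notation w := (wmap Ad).
Local Notation c := (cmap Ad).
Local Notation XJ := (cprod C X J).

Definition copy_snd : Hom C XJ (cprod C J XJ) := cpair (cp2 X J) (cid XJ).

Definition strength : LAr L := m X J ;; Fm copy_snd ;; mi J XJ.

Lemma strength_dom : ldom strength = tens (F X) (F J).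
Proof. unfold strength; arrow_shape. Qed.
Lemma strength_cod : lcod strength = tens (F J) (F XJ).
Proof. unfold strength; arrow_shape. Qed.

#[local] Hint Rewrite strength_dom strength_cod : arrow_shape.

Lemma Sigma_prefix_strength :
  (lid (F X) ** c J) ;; (lsym (F X) (F J) ** lid (F J)) ;; (lid (F J) ** m X J) = strength.
Proof.
  apply (split_mono_cancel (h := m J XJ) (h' := mi J XJ));
    [arrow_shape | rewrite mm_mminv; arrow_shape | arrow_shape | arrow_shape |].
  unfold strength; rewrite (lcompA (f := m X J ;; Fm copy_snd)), mminv_mm, lcomp_lid
    by arrow_shape.
  rewrite (lcompA (g := lid (F J) ** m X J)), <- mm_assoc, <- !lcompA by arrow_shape.
  rewrite (lcompA (f := lid (F X) ** c J)), lcomp_tensA, mm_sym, lid_lcomp, tensA_lcompl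
    by arrow_shape.
  replace (Fm (cswap X J) ** lid (F J)) with (Fm (cswap X J) ** Fm (cid J))
    by (rewrite Fm_id; reflexivity).
  rewrite <- !lcompA, (lcompA (g := Fm (cswap X J) ** Fm (cid J))), mm_nat, <- !lcompA
    by arrow_shape.
  rewrite (lcompA (f := lid (F X) ** c J)) by arrow_shape.
  unfold cmap; rewrite tensA_lcompr, (lcompA (f := lid (F X) ** Fm (cdiag J))) by arrow_shape.
  rewrite <- (lcompA (f := lid (F X) ** mi J J)), mminv_mm_assoc_inv by arrow_shape.
  rewrite <- (lcompA (f := lid (F X) ** Fm (cdiag J))) by arrow_shape.
  replace (lid (F X) ** Fm (cdiag J)) with (Fm (cid X) ** Fm (cdiag J))
    by (rewrite Fm_id; reflexivity).
  rewrite mm_nat.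
  rewrite !lcompA, <- !Fm_comp by arrow_shape.
  do 2 f_equal; unfold copy_snd; cartesian.
Qed.

Lemma Sigma_homE A B u : ldom u = tens (F XJ) A ->
  fhom (Sigma Ad X J) A B u = (strength ** lid A) ;; (lid (F J) ** u).
Proof.
  intros Hu; cbn [fhom Sigma].
  rewrite tensA_lcompr, <- (tensA_assoc (lid (F J)) (m X J) (lid A)),
    <- (tensA_assoc (lid (F X)) (c J) (lid A)), <- (tens_id (F J) A),
    <- (tensA_assoc (lsym (F X) (F J)) (lid (F J)) (lid A)), <- lcompA by arrow_shape.
  rewrite !lcomp_tensA, !lid_lcomp, Sigma_prefix_strength by arrow_shape.
  reflexivity.
Qed.

Lemma lid_cmap_mm :
  (lid (F J) ** c XJ) ;; (lid (F J) ** m XJ XJ) ;; m J (cprod C XJ XJ)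
  = m J XJ ;; Fm (cprodm (cid J) (cdiag XJ)).
Proof.
  rewrite <- tensA_lcompr, cmap_mm, <- (Fm_id Ad J), mm_nat by arrow_shape; reflexivity.
Qed.

Lemma cmap_lid_mm :
  (c X ** lid (F J)) ;; (lid (F X) ** m X J) ;; m X XJ
  = m X J ;; Fm (cprodm (cdiag X) (cid J)) ;; Fm (cassoc X X J).
Proof.
  unfold cmap at 1; rewrite tensA_lcompl, (lcompA3_congr (mminv_mm_assoc Ad X X J))
    by arrow_shape.
  rewrite <- lcompA, <- (Fm_id Ad J), mm_nat by arrow_shape; reflexivity.
Qed.

Lemma lid_strength_mm :
  (lid (F X) ** strength) ;; (m X J ** lid (F XJ)) ;; m XJ XJ
  = (lid (F X) ** m X J) ;; m X XJ ;; Fm (cprodm (cid X) copy_snd) ;; Fm (cassoc_inv X J XJ).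
Proof.
  unfold strength; rewrite !tensA_lcompr, (lcompA3_congr (mminv_mm_assoc_inv Ad X J XJ))
    by arrow_shape.
  assert (Hnat : (lid (F X) ** Fm copy_snd) ;; m X (cprod C J XJ)
                 = m X XJ ;; Fm (cprodm (cid X) copy_snd))
    by (rewrite <- (Fm_id Ad X), mm_nat; reflexivity).
  rewrite <- lcompA, (lcompA_congr Hnat), <- lcompA by arrow_shape; reflexivity.
Qed.

Lemma strength_lid_mm :
  (strength ** lid (F XJ)) ;; (lid (F J) ** m XJ XJ) ;; m J (cprod C XJ XJ)
  = (m X J ** lid (F XJ)) ;; m XJ XJ ;; Fm (cprodm copy_snd (cid XJ)) ;; Fm (cassoc J XJ XJ).
Proof.
  unfold strength; rewrite !tensA_lcompl, (lcompA3_congr (mminv_mm_assoc Ad J XJ XJ))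
    by arrow_shape.
  assert (Hnat : (Fm copy_snd ** lid (F XJ)) ;; m (cprod C J XJ) XJ
                 = m XJ XJ ;; Fm (cprodm copy_snd (cid XJ)))
    by (rewrite <- (Fm_id Ad XJ), mm_nat; reflexivity).
  rewrite <- lcompA, (lcompA_congr Hnat), <- lcompA by arrow_shape; reflexivity.
Qed.

(* After composing with the isomorphism [(F J (x) m) ; m], both sides become
   [m ; F h] for maps [h] of C that agree, by the four lemmas above. *)
Lemma strength_cmap :
  (c X ** lid (F J)) ;; (lid (F X) ** strength) ;; (strength ** lid (F XJ))
  = strength ;; (lid (F J) ** c XJ).
Proof.
  apply (split_mono_cancel (h := (lid (F J) ** m XJ XJ) ;; m J (cprod C XJ XJ))
                           (h' := mi J (cprod C XJ XJ) ;; (lid (F J) ** mi XJ XJ)));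
    [arrow_shape | | arrow_shape | arrow_shape |].
  { rewrite lcompA, <- (lcompA (f := m J (cprod C XJ XJ))), mm_mminv, lid_lcomp,
      lcomp_tensA, mm_mminv, lid_lcomp, tens_id by arrow_shape.
    f_equal; arrow_shape. }
  rewrite <- !lcompA, (lcompA3_congr strength_lid_mm), <- !lcompA by arrow_shape.
  rewrite (lcompA3_congr lid_strength_mm), <- !lcompA, cmap_lid_mm by arrow_shape.
  rewrite (lcompA3_congr lid_cmap_mm) by arrow_shape.
  unfold strength; rewrite <- !lcompA, (lcompA_congr (mminv_mm Ad J XJ)), lcomp_lid
    by arrow_shape.
  rewrite !lcompA, <- !Fm_comp by arrow_shape.
  do 2 f_equal; unfold copy_snd; cartesian.
Qed.

Lemma strength_wmap_lid : strength ;; (w J ** lid (F XJ)) = m X J.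
Proof.
  unfold strength; rewrite lcompA, mminv_wmap_lid, lcompA, <- Fm_comp by arrow_shape.
  replace (ccomp copy_snd (cp2 J XJ)) with (cid XJ) by (unfold copy_snd; cartesian).
  rewrite Fm_id, lcomp_lid by arrow_shape; reflexivity.
Qed.

Lemma strength_lid_wmap : strength ;; (lid (F J) ** w XJ) = w X ** lid (F J).
Proof.
  unfold strength; rewrite lcompA, mminv_lid_wmap, lcompA, <- Fm_comp by arrow_shape.
  replace (ccomp copy_snd (cp1 J XJ)) with (cp2 X J) by (unfold copy_snd; cartesian).
  apply mm_Fcp2.
Qed.

Lemma strength_wmap_tensA A b h : ldom h = tens (F XJ) A -> lcod h = b ->
  (strength ** lid A) ;; (lid (F J) ** h) ;; (w J ** lid b) = (m X J ** lid A) ;; h.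
Proof.
  intros Hh <-; rewrite lcompA, tensA_interchange, <- lcompA, wmap_cod, tensA_unitl, Hh
    by arrow_shape.
  rewrite <- (tens_id (F XJ) A), <- tensA_assoc, lcomp_tensA, strength_wmap_lid, lid_lcomp
    by arrow_shape.
  reflexivity.
Qed.

Lemma nuE A : nu Ad X J A = Fm (cp2 X J) ** lid A.
Proof.
  unfold nu; rewrite <- (tens_id (F J) A), <- tensA_assoc, lcomp_tensA, mminv_wmap_lid, lid_lcomp
    by arrow_shape.
  reflexivity.
Qed.

Lemma Sigma_hom_id A :
  fhom (Sigma Ad X J) A A (LS_id_snd Ad XJ A) = LS_id_snd Ad X (tens (F J) A).
Proof.
  unfold LS_id_snd; rewrite Sigma_homE, <- (tensA_assoc (lid (F J)) (w XJ) (lid A)),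
    lcomp_tensA, lid_lcomp, strength_lid_wmap, tensA_assoc, tens_id by arrow_shape.
  reflexivity.
Qed.

Lemma Sigma_hom_comp A B D u v :
  ldom u = tens (F XJ) A -> lcod u = B -> ldom v = tens (F XJ) B -> lcod v = D ->
  fhom (Sigma Ad X J) A D (LS_comp_snd Ad A (cid XJ) u v)
  = LS_comp_snd Ad (tens (F J) A) (cid X)
      (fhom (Sigma Ad X J) A B u) (fhom (Sigma Ad X J) B D v).
Proof.
  intros Hu Hu' Hv Hv'.
  rewrite !Sigma_homE by (unfold LS_comp_snd; arrow_shape).
  unfold LS_comp_snd; rewrite !Fm_id.
  transitivity (((strength ;; (lid (F J) ** c XJ)) ** lid A)
                ;; (lid (tens (F J) (F XJ)) ** u) ;; (lid (F J) ** v)).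
  - rewrite !tensA_lcompr, <- (tensA_assoc (lid (F J)) (c XJ) (lid A)),
      <- (tensA_assoc (lid (F J)) (lid (F XJ)) u), tens_id, <- !lcompA by arrow_shape.
    rewrite (lcomp_tensA (f := strength)), lid_lcomp by arrow_shape.
    reflexivity.
  - rewrite (tensA_lcompr (f := strength ** lid A)), <- !lcompA by arrow_shape.
    rewrite <- (tensA_assoc (lid (F X)) (lid (F J)) u), tens_id by arrow_shape.
    rewrite (lcompA (g := lid (tens (F X) (F J)) ** u)), (tensA_interchange (u := u)), Hu,
      strength_cod, <- !lcompA by arrow_shape.
    rewrite <- (tens_id (F J) A), <- (tens_id (F XJ) A),
      <- (tensA_assoc (c X) (lid (F J)) (lid A)), <- (tensA_assoc (lid (F X)) strength (lid A)),
      <- (tensA_assoc strength (lid (F XJ)) (lid A)).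
    rewrite (lcomp_tensA (f := c X ** lid (F J))), lid_lcomp by arrow_shape.
    rewrite (lcomp_tensA (f := (c X ** lid (F J)) ;; (lid (F X) ** strength))), lid_lcomp
      by arrow_shape.
    rewrite strength_cmap; reflexivity.
Qed.

Lemma Sigma_is_functor : is_functor (Sigma Ad X J).
Proof.
  split; [| split].
  - intros A B u [Hu Hu']; split; cbn; arrow_shape.
  - intro A; apply Sigma_hom_id.
  - intros A B D u v [Hu Hu'] [Hv Hv']; exact (Sigma_hom_comp Hu Hu' Hv Hv').
Qed.

Lemma cmap_Fcp2 : c XJ ;; (Fm (cp2 X J) ** lid (F XJ)) = Fm copy_snd ;; mi J XJ.
Proof.
  unfold cmap; rewrite <- (Fm_id Ad XJ), lcompA, mminv_nat, <- lcompA, <- Fm_comp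
    by arrow_shape.
  do 2 f_equal; unfold copy_snd; cartesian.
Qed.

Lemma mminv_strength : mi X J ;; strength = Fm copy_snd ;; mi J XJ.
Proof.
  unfold strength; rewrite <- !lcompA, mminv_mm, lid_lcomp by arrow_shape; reflexivity.
Qed.

Lemma nu_natural A A' f : ldom f = tens (F XJ) A -> lcod f = A' ->
  LS_comp_snd Ad A (cid XJ) f (nu Ad X J A')
  = LS_comp_snd Ad A (cid XJ) (nu Ad X J A)
      ((Fm (cp1 X J) ** lid (tens (F J) A)) ;; fhom (Sigma Ad X J) A A' f).
Proof.
  intros Hf Hf'; rewrite Sigma_homE, !nuE by assumption.
  unfold LS_comp_snd; rewrite Fm_id.
  transitivity (((Fm copy_snd ;; mi J XJ) ** lid A) ;; (lid (F J) ** f)).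
  - rewrite lcompA, tensA_interchange, Hf, Fm_cod, <- lcompA by arrow_shape.
    rewrite <- (tens_id (F XJ) A), <- tensA_assoc, lcomp_tensA, lid_lcomp, cmap_Fcp2
      by arrow_shape.
    reflexivity.
  - rewrite <- !lcompA, (lcompA (f := c XJ ** lid A)) by arrow_shape.
    rewrite (lcomp_tensA (f := lid (F XJ))), lid_lcomp, lcomp_lid, <- tensA_assoc
      by arrow_shape.
    rewrite (lcomp_tensA (f := c XJ)), cmap_Fcp, lid_lcomp by arrow_shape.
    rewrite (lcomp_tensA (f := mi X J)), mminv_strength, lid_lcomp by arrow_shape.
    reflexivity.
Qed.

Lemma mu_natural B B' g : ldom g = tens (F X) B -> lcod g = B' ->
  LS_comp_snd Ad (tens (F J) B) (cid X)
    (fhom (Sigma Ad X J) B B' ((Fm (cp1 X J) ** lid B) ;; g)) (mu Ad X J B')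
  = LS_comp_snd Ad (tens (F J) B) (cid X) (mu Ad X J B) g.
Proof.
  intros Hg Hg'; rewrite Sigma_homE by arrow_shape.
  unfold mu; rewrite LS_comp_snd_wmap, strength_wmap_tensA by arrow_shape.
  rewrite <- lcompA, lcomp_tensA, mm_Fcp1, lid_lcomp by arrow_shape.
  unfold LS_comp_snd; rewrite Fm_id, <- (tensA_assoc (lid (F X)) (w X)), lcomp_tensA,
    cmap_lid_wmap, lid_lcomp, tensA_assoc by arrow_shape.
  reflexivity.
Qed.

Lemma triangle_Sigma A :
  LS_comp_snd Ad (tens (F J) A) (cid X)
    (fhom (Sigma Ad X J) A (tens (F J) A) (nu Ad X J A)) (mu Ad X J (tens (F J) A))
  = LS_id_snd Ad X (tens (F J) A).
Proof.
  rewrite nuE, Sigma_homE by arrow_shape.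
  unfold mu; rewrite LS_comp_snd_wmap, strength_wmap_tensA, lcomp_tensA, mm_Fcp2, lid_lcomp
    by arrow_shape.
  unfold LS_id_snd; rewrite tensA_assoc, tens_id; reflexivity.
Qed.

Lemma triangle_reindex B :
  LS_comp_snd Ad B (cid XJ) (nu Ad X J B) ((Fm (cp1 X J) ** lid (tens (F J) B)) ;; mu Ad X J B)
  = LS_id_snd Ad XJ B.
Proof.
  unfold mu; rewrite nuE, lcomp_tensA, Fm_wmap, lid_lcomp, LS_comp_snd_wmap, lcomp_tensA,
    Fm_wmap, lid_lcomp by arrow_shape.
  reflexivity.
Qed.

End SigmaAdjunction.

Theorem proposition3p23 (C : cartesian_cat) (L : smcat) (Ad : lnl C L) (X J : Ob C) :
  is_adjunction (Sigma Ad X J) (reindex Ad (cp1 X J)) (nu Ad X J) (mu Ad X J).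
Proof.
  split; [apply Sigma_is_functor |].
  split; [apply reindex_is_functor |].
  split; [intro A; rewrite nuE; split; cbn; arrow_shape |].
  split; [intro B; split; cbn; unfold mu; arrow_shape |].
  split; [intros A A' f [Hf Hf']; exact (nu_natural Hf Hf') |].
  split; [intros B B' g [Hg Hg']; exact (mu_natural J Hg Hg') |].
  split; [apply triangle_Sigma | apply triangle_reindex].
Qed.
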